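(* Let $K\subset Y$ be a pointed closed convex cone in a real normed space $Y$, and let $A,B$ be nonempty subsets of $Y$. (i) If $A\subset B+K$, then $$y^*(A)+[0,+\infty)\subset y^*(B)+[0,+\infty)\quad\text{for all } y^*\in K^+\setminus\{0\}.$$ Conversely, if $B+K$ is convex and closed and this inclusion holds for all $y^*\in K^+\setminus\{0\}$, then $A\subset B+K$. (ii) Suppose $\operatorname{int}K\neq\emptyset$. If $A\subset B+\operatorname{int}K$, then $$y^*(A)\subset y^*(B)+(0,+\infty)\quad\text{for all } y^*\in K^+\setminus\{0\}.$$ Conversely, if $B+K$ is convex and this inclusion holds for all $y^*\in K^+\setminus\{0\}$, then $A\subset B+\operatorname{int}K$.
   Context: The positive dual cone is $K^+=\{y^*\in Y^*: y^*(k)\ge 0 \text{ for all } k\in K\}$, where $Y^*$ is the topological dual of $Y$. For $y^*\in Y^*$ and $S\subset Y$, $y^*(S)=\{y^*(s): s\in S\}$. *)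

From HB Require Import structures.
From mathcomp Require Import all_boot all_order all_algebra.
From mathcomp Require Import all_classical all_reals all_analysis.
Set Implicit Arguments. Unset Strict Implicit. Unset Printing Implicit Defensive.
Import Order.TTheory GRing.Theory Num.Theory.
Import numFieldNormedType.Exports.
Local Open Scope classical_set_scope.
Local Open Scope ring_scope.

Section Defs.
Variables (R : realType) (Y : normedModType R).

Definition set_add (A B : set Y) : set Y := [set a + b | a in A & b in B].

Definition setR_add (S T : set R) : set R := [set s + t | s in S & t in T].

Definition convexY (C : set Y) : Prop :=
  forall x y (t : R), 0 <= t -> t <= 1 -> C x -> C y -> C (t *: x + (1 - t) *: y).

Definition is_cone (K : set Y) : Prop :=
  forall k (t : R), 0 <= t -> K k -> K (t *: k).

Definition pointed (K : set Y) : Prop :=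
  K `&` [set - k | k in K] = [set 0].

Definition pointed_closed_convex_cone (K : set Y) : Prop :=
  [/\ is_cone K, convexY K, closed K & pointed K].

Definition in_dual (f : Y -> R) : Prop :=
  [/\ forall x y, f (x + y) = f x + f y,
      forall (a : R) x, f (a *: x) = a * f x
    & continuous f].

Definition in_dual_cone_nz (K : set Y) (f : Y -> R) : Prop :=
  [/\ in_dual f, (forall k, K k -> 0 <= f k) & f <> (fun _ => 0)].

End Defs.

From HB Require Import structures.
From mathcomp Require Import all_boot all_order all_algebra.
From mathcomp Require Import all_classical all_reals all_analysis.
From mathcomp Require Import ring lra.
Import Order.TTheory GRing.Theory Num.Theory.
Import numFieldNormedType.Exports.
Local Open Scope classical_set_scope.
Local Open Scope ring_scope.
Set Implicit Arguments. Unset Strict Implicit. Unset Printing Implicit Defensive.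

(* The forward implications only use that y* is additive and nonnegative on K
   (strictly positive on int K when y* <> 0).  For the converses, a point
   a of A outside B + K (resp. B + int K) is separated by a continuous linear
   functional from the open convex set (B + K) + {|u| < e} (resp. B + int K);
   since these sets are stable under adding K, the functional lies in K^+, and
   the scalar inclusion evaluated at a then contradicts the separation.  The
   separation theorem itself is derived from the Hahn-Banach extension, by
   Zorn's lemma, of functionals bounded by 1 on an absorbing convex set. *)

Section RealFacts.
Variable R : realType.

Lemma ler_of_forall_lerD_mul (x c q : R) :
  (forall s, 0 < s -> x <= c + s * q) -> 0 <= q -> x <= c.
Proof.
move=> H q0; rewrite leNgt; apply/negP => xc.
have s0 : 0 < (x - c) / (q + 1) by rewrite divr_gt0; lra.
have := H _ s0.
have : (x - c) / (q + 1) * q < x - c by rewrite mulrAC ltr_pdivrMr; nra.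
lra.
Qed.

Lemma ge0_of_forall_lerD_mul (x c q : R) :
  (forall t, 0 < t -> x <= c + t * q) -> 0 <= q.
Proof.
move=> H; rewrite leNgt; apply/negP => q0.
have t0 : 0 < (`|c - x| + 1) / - q by rewrite divr_gt0; have := normr_ge0 (c - x); lra.
have := H _ t0.
have -> : (`|c - x| + 1) / - q * q = - (`|c - x| + 1) by field; rewrite lt_eqF.
have := ler_norm (c - x); lra.
Qed.

Lemma ler_slopes_of_convex_le1 (a b s t : R) : 0 < s -> 0 < t ->
  (t / (s + t)) * b + (1 - t / (s + t)) * a <= 1 -> (b - 1) / s <= (1 - a) / t.
Proof.
move=> s0 t0 H.
have st0 : 0 < s + t by lra.
have E : 1 - t / (s + t) = s / (s + t) by field; lra.
rewrite E in H.
have H2 : t * b + s * a <= s + t.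
  have -> : t * b + s * a = (t / (s + t) * b + s / (s + t) * a) * (s + t).
    by field; lra.
  by rewrite -[X in _ <= X]mul1r ler_pM2r.
rewrite ler_pdivrMr // mulrAC ler_pdivlMr //; nra.
Qed.

End RealFacts.

Section NormedFacts.
Variables (R : realType) (Y : normedModType R).
Implicit Types (C : set Y) (c y : Y).

Lemma interior_normP C c :
  interior C c <-> exists2 e, 0 < e & forall u, `|u| < e -> C (c + u).
Proof.
split.
- move=> /nbhs_ballP [e /= e0 sub]; exists e => // u ue.
  by apply: sub; rewrite -ball_normE /= opprD addrA subrr sub0r normrN.
- move=> [e e0 H]; apply/nbhs_ballP; exists e => //= z; rewrite -ball_normE /= => Hz.
  by rewrite -(subrKC c z); apply: H; rewrite distrC.
Qed.

Lemma open_normP C :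
  open C <-> forall c, C c -> exists2 e, 0 < e & forall u, `|u| < e -> C (c + u).
Proof.
by rewrite openE; split => H c Cc; [apply/interior_normP/H | apply/interior_normP/H].
Qed.

Lemma exists_scale_norm_lt y (e : R) : 0 < e -> exists2 s, 0 < s & `|s *: y| < e.
Proof.
move=> e0; have ny : 0 < `|y| + 1 by rewrite ltr_wpDl.
exists (e / (2 * (`|y| + 1))); first by rewrite divr_gt0 // mulr_gt0.
rewrite normrZ ger0_norm; last by rewrite divr_ge0 ?mulr_ge0 ?ltW.
have : e / (2 * (`|y| + 1)) * `|y| <= e / (2 * (`|y| + 1)) * (`|y| + 1).
  by rewrite ler_wpM2l ?lerDl // divr_ge0 ?mulr_ge0 ?ltW.
have -> : e / (2 * (`|y| + 1)) * (`|y| + 1) = e / 2 by field; rewrite gt_eqF.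
lra.
Qed.

Lemma convexY_interior C : convexY C -> convexY (interior C).
Proof.
move=> cC x y t t0 t1 /interior_normP[e1 e10 H1] /interior_normP[e2 e20 H2].
apply/interior_normP; exists (Num.min e1 e2); first by rewrite lt_min e10 e20.
move=> u; rewrite lt_min => /andP [u1 u2].
have -> : t *: x + (1 - t) *: y + u = t *: (x + u) + (1 - t) *: (y + u).
  by rewrite !scalerDr addrACA -scalerDl subrKC scale1r.
by apply: cC => //; [apply: H1 | apply: H2].
Qed.

Lemma continuous_linear_le1_ball (F : Y -> R) (e : R) :
  (forall x y, F (x + y) = F x + F y) -> (forall (t : R) x, F (t *: x) = t * F x) ->
  0 < e -> (forall u, `|u| < e -> F u <= 1) -> continuous F.
Proof.
move=> Fa Fs e0 Fb.
have FN v : F (- v) = - F v by rewrite -scaleN1r Fs mulN1r.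
have Fnorm u : `|u| < e -> `|F u| <= 1.
  move=> ue; rewrite ler_norml Fb // andbT lerNl -FN.
  by apply: Fb; rewrite normrN.
move=> x; apply/cvgrPdist_lt => eps eps0.
rewrite nearE; apply/nbhs_ballP; exists (e * eps / 2); first by rewrite /= divr_gt0 // mulr_gt0.
move=> t; rewrite -ball_normE /= => Ht.
have -> : F x - F t = F (x - t) by rewrite Fa FN.
set v := x - t in Ht *.
have -> : v = (eps / 2) *: ((2 / eps) *: v).
  by rewrite scalerA (_ : eps / 2 * (2 / eps) = 1) ?scale1r //; field; rewrite gt_eqF.
rewrite Fs normrM ger0_norm; last by rewrite divr_ge0 // ltW.
have : `|F ((2 / eps) *: v)| <= 1.
  apply: Fnorm; rewrite normrZ ger0_norm; last by rewrite divr_ge0 // ltW.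
  rewrite mulrAC ltr_pdivrMr //; lra.
rewrite -(ler_pM2l (_ : 0 < eps / 2)) ?divr_gt0 // mulr1.
lra.
Qed.

End NormedFacts.

Section LinearExtension.
Variables (R : realType) (Y : normedModType R).

Definition absorbing (C : set Y) := forall y, exists2 s : R, 0 < s & C (s *: y).

(* [G] is the graph of a linear functional defined on a linear subspace of [Y]
   and bounded above by [1] on [C]. *)
Definition partial_linear_le1 (C : set Y) (G : set (Y * R)) :=
  [/\ forall x a b, G (x, a) -> G (x, b) -> a = b,
      forall x y a b, G (x, a) -> G (y, b) -> G (x + y, a + b),
      forall x a t, G (x, a) -> G (t *: x, t * a)
    & forall x a, G (x, a) -> C x -> a <= 1].

Lemma partial_linear_le1_chain (C : set Y) (G0 : set (Y * R)) (F : set (set (Y * R))) :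
  partial_linear_le1 C G0 -> F `<=` (fun G => partial_linear_le1 C (G0 `|` G)) ->
  total_on F subset -> partial_linear_le1 C (G0 `|` \bigcup_(X in F) X).
Proof.
move=> V0 FP Ftot; set U := G0 `|` _.
have two p q : U p -> U q ->
    exists Gm, [/\ partial_linear_le1 C Gm, Gm p, Gm q & Gm `<=` U].
  have sub X : F X -> G0 `|` X `<=` U by move=> FX w [Hw|Hw]; [left|right; exists X].
  case=> [Hp|[X FX Xp]] [Hq|[X' FX' Xq]].
  - by exists G0; split => // w Hw; left.
  - by exists (G0 `|` X'); split; [exact: FP | left | right | exact: sub].
  - by exists (G0 `|` X); split; [exact: FP | right | left | exact: sub].
  - have [XX'|X'X] := Ftot _ _ FX FX'.
    + by exists (G0 `|` X'); split; [exact: FP | right; apply: XX' | right | exact: sub].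
    + by exists (G0 `|` X); split; [exact: FP | right | right; apply: X'X | exact: sub].
split.
- move=> x a b Ha Hb; have [Gm [[Gf _ _ _] Ha' Hb' _]] := two _ _ Ha Hb; exact: Gf Ha' Hb'.
- move=> x y a b Ha Hb; have [Gm [[_ Ga _ _] Ha' Hb' sub]] := two _ _ Ha Hb.
  exact/sub/Ga.
- move=> x a t Ha; have [Gm [[_ _ Gs _] Ha' _ sub]] := two _ _ Ha Ha.
  exact/sub/Gs.
- move=> x a Ha; have [Gm [[_ _ _ Gb] Ha' _ _]] := two _ _ Ha Ha; exact: Gb.
Qed.

Variable C : set Y.
Hypotheses (C_convex : convexY C) (C_absorbing : absorbing C).

Lemma partial_linear_le1_slopes (G : set (Y * R)) (z x y : Y) (a b s t : R) :
  partial_linear_le1 C G -> 0 < s -> 0 < t -> G (y, b) -> G (x, a) ->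
  C (y - s *: z) -> C (x + t *: z) -> (b - 1) / s <= (1 - a) / t.
Proof.
move=> [_ Ga Gs Gb] s0 t0 Gyb Gxa Cy Cx.
apply: ler_slopes_of_convex_le1 => //.
have st0 : 0 < s + t by lra.
set la := t / (s + t).
have la0 : 0 <= la by rewrite /la divr_ge0 // ltW.
have la1 : la <= 1 by rewrite /la ler_pdivrMr // mul1r; lra.
apply: (Gb (la *: y + (1 - la) *: x)); first by apply: Ga; apply: Gs.
have -> : la *: y + (1 - la) *: x = la *: (y - s *: z) + (1 - la) *: (x + t *: z).
  rewrite !scalerDr !scalerN !scalerA.
  have -> : (1 - la) * t = la * s by rewrite /la; field; lra.
  by rewrite addrACA addNr addr0.
exact: C_convex.
Qed.

Lemma partial_linear_le1_line (x0 : Y) : ~ C x0 ->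
  partial_linear_le1 C [set p | exists l, p = (l *: x0, l)].
Proof.
move=> nCx0.
have C0 : C 0 by have [s _] := C_absorbing 0; rewrite scaler0.
have x00 : x0 != 0 by apply: contra_notN nCx0 => /eqP ->.
split.
- move=> x a b [l [E1 ->]] [m [E2 ->]].
  have : (l - m) *: x0 == 0 by rewrite scalerBl -E1 -E2 subrr.
  by rewrite scaler_eq0 (negbTE x00) orbF subr_eq0 => /eqP.
- by move=> x y a b [l [-> ->]] [m [-> ->]]; exists (l + m); rewrite scalerDl.
- by move=> x a t [l [-> ->]]; exists (t * l); rewrite scalerA.
- move=> x a [l [-> ->]] Cl; rewrite leNgt; apply/negP => l1; apply: nCx0.
  have -> : x0 = l^-1 *: (l *: x0) + (1 - l^-1) *: 0.
    by rewrite scaler0 addr0 scalerA mulVf ?gt_eqF ?scale1r //; lra.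
  by apply: C_convex => //; [rewrite invr_ge0 | rewrite invf_le1]; lra.
Qed.

(* The one-step extension of Hahn-Banach: the value [al] at [z] must lie
   between every lower slope [(a - 1) / s] and every upper slope [(1 - a) / t]. *)
Lemma partial_linear_le1_extend (G : set (Y * R)) (z : Y) :
  partial_linear_le1 C G -> G (0, 0) -> (forall a, ~ G (z, a)) ->
  exists G', [/\ partial_linear_le1 C G', G `<=` G' & exists al, G' (z, al)].
Proof.
move=> VG G00 nz; have [Gf Ga Gs Gb] := VG.
pose Lw := [set v | exists x a s, [/\ 0 < s, G (x, a), C (x - s *: z) & v = (a - 1) / s]].
pose Up := [set v | exists x a t, [/\ 0 < t, G (x, a), C (x + t *: z) & v = (1 - a) / t]].
have LU l u : Lw l -> Up u -> l <= u.
  move: l u => _ _ [y [b [s [s0 Gyb Cy ->]]]] [x [a [t [t0 Gxa Cx ->]]]].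
  exact: (partial_linear_le1_slopes VG s0 t0 Gyb Gxa Cy Cx).
have [s1 s10 Cs1] := C_absorbing (- z).
have [t1 t10 Ct1] := C_absorbing z.
have Lw0 : Lw ((0 - 1) / s1) by exists 0, 0, s1; split => //; rewrite sub0r -scalerN.
have Up0 : Up ((1 - 0) / t1) by exists 0, 0, t1; split => //; rewrite add0r.
pose al := sup Lw.
have Lal l : Lw l -> l <= al.
  move=> Ll; apply: sup_upper_bound => //; split; first by exists ((0 - 1) / s1).
  by exists ((1 - 0) / t1) => l' Ll'; apply: LU.
have alU u : Up u -> al <= u.
  by move=> Uu; apply: ge_sup; [exists ((0 - 1) / s1) | move=> l Ll; apply: LU].
pose G' := [set p | exists x a t, G (x, a) /\ p = (x + t *: z, a + t * al)].
exists G'; split.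
- split.
  + move=> w c d [x [a [t [Gxa [E1 ->]]]]] [x' [a' [t' [Gxa' [E2 ->]]]]].
    have [tt|tt] := eqVneq t t'.
      subst t'; have xx : x = x' by apply: (addIr (t *: z)); rewrite -E1 -E2.
      by subst x'; rewrite (Gf _ _ _ Gxa Gxa').
    exfalso; apply: (nz ((t - t')^-1 * (a' + (-1) * a))).
    have -> : z = (t - t')^-1 *: (x' + (-1) *: x).
      apply: (@scalerI _ _ (t - t')); first by rewrite subr_eq0.
      rewrite scalerA mulfV ?subr_eq0 // scale1r scaleN1r scalerBl.
      by apply/eqP; rewrite subr_eq addrAC -E2 E1 addrAC subrr add0r.
    by apply: (Gs); apply: Ga => //; apply: Gs.
  + move=> w1 w2 c1 c2 [x [a [t [Gxa [-> ->]]]]] [y [b [s [Gyb [-> ->]]]]].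
    exists (x + y), (a + b), (t + s); split; first exact: Ga.
    by congr pair; [rewrite scalerDl addrACA | rewrite mulrDl addrACA].
  + move=> w c r [x [a [t [Gxa [-> ->]]]]].
    exists (r *: x), (r * a), (r * t); split; first exact: Gs.
    by rewrite scalerDr scalerA mulrDr mulrA.
  + move=> w c [x [a [t [Gxa [-> ->]]]]] Cw.
    have [t0|t0|t0] := ltgtP t 0.
    * have : Lw ((a - 1) / (- t)).
        by exists x, a, (- t); split => //; [lra | rewrite scaleNr opprK].
      by move=> /Lal; rewrite ler_pdivrMr; [nra | lra].
    * have : Up ((1 - a) / t) by exists x, a, t.
      by move=> /alU; rewrite ler_pdivlMr //; nra.
    * by rewrite t0 mul0r addr0; apply: (Gb x) => //; rewrite t0 scale0r addr0 in Cw.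
- by move=> [x a] Gxa; exists x, a, 0; rewrite scale0r mul0r !addr0.
- by exists al, 0, 0, 1; rewrite scale1r mul1r !add0r.
Qed.

(* Hahn-Banach in gauge form, by Zorn's lemma on the extensions of the line
   through [x0]. *)
Lemma exists_linear_le1_eq1 (x0 : Y) : ~ C x0 ->
  exists F : Y -> R, [/\ forall x y, F (x + y) = F x + F y,
     forall (t : R) x, F (t *: x) = t * F x, F x0 = 1 & forall c, C c -> F c <= 1].
Proof.
move=> nCx0.
pose G0 := [set p : Y * R | exists l, p = (l *: x0, l)].
have V0 : partial_linear_le1 C G0 := partial_linear_le1_line nCx0.
pose P G := partial_linear_le1 C (G0 `|` G).
have [M [PM maxM]] := @Zorn_bigcup _ P (fun F FP Ftot => partial_linear_le1_chain V0 FP Ftot).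
pose M' := G0 `|` M.
have [Mf Ma Ms Mb] := PM.
have M'00 : M' (0, 0) by left; exists 0; rewrite scale0r.
have Mtotal z : exists a, M' (z, a).
  apply: contrapT => nz; have nz' a : ~ M' (z, a) by move=> Ha; apply: nz; exists a.
  have [G' [VG' sub [al Gal]]] := partial_linear_le1_extend PM M'00 nz'.
  apply: (maxM G').
    split; first by move=> p Hp; apply: sub; right.
    by move=> H; apply: (nz' al); right; apply: H.
  rewrite /P (_ : G0 `|` G' = G') //.
  by apply/seteqP; split => [p [Hp|Hp] //|p Hp]; [apply: sub; left | right].
have [F HF] := choice Mtotal.
exists F; split.
- by move=> x y; apply: (Mf (x + y)); [apply: HF | apply: Ma; apply: HF].
- by move=> t x; apply: (Mf (t *: x)); [apply: HF | apply: Ms; apply: HF].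
- by apply: (Mf x0); [apply: HF | left; exists 1; rewrite scale1r].
- by move=> c Cc; apply: (Mb c) => //; apply: HF.
Qed.

End LinearExtension.

Lemma convex_open_separation (R : realType) (Y : normedModType R) (C : set Y) (c0 x0 : Y) :
  convexY C -> open C -> C c0 -> ~ C x0 ->
  exists f : Y -> R, [/\ in_dual f, f c0 = f x0 + 1 & forall c, C c -> f x0 <= f c].
Proof.
move=> cC /open_normP oC Cc0 nCx0.
have [e e0 Cball] := oC _ Cc0.
pose C' := [set y | C (c0 + y)].
have cC' : convexY C'.
  move=> x y t t0 t1 Cx Cy; rewrite /C' /=.
  have -> : c0 + (t *: x + (1 - t) *: y) = t *: (c0 + x) + (1 - t) *: (c0 + y).
    by rewrite !scalerDr addrACA -scalerDl subrKC scale1r.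
  exact: cC.
have absC' : absorbing C'.
  by move=> y; have [s s0 sy] := exists_scale_norm_lt y e0; exists s => //; apply: Cball.
have nCx0' : ~ C' (x0 - c0) by rewrite /C' /= subrKC.
have [F [Fa Fs Fx Fb]] := exists_linear_le1_eq1 cC' absC' nCx0'.
have FN v : F (- v) = - F v by rewrite -scaleN1r Fs mulN1r.
have {}Fx : F x0 = F c0 + 1 by rewrite -Fx Fa FN addrC subrK.
exists (fun y => - F y); split.
- split; [by move=> x y; rewrite Fa opprD | by move=> t x; rewrite Fs mulrN |].
  by move=> x; apply: continuousN; apply: (continuous_linear_le1_ball Fa Fs e0) => u /Cball /Fb.
- by rewrite Fx; lra.
- move=> c Cc; have : C' (c - c0) by rewrite /C' /= subrKC.
  by move=> /Fb; rewrite Fa FN lerN2 Fx; lra.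
Qed.

Section ConvexCone.
Variables (R : realType) (Y : normedModType R) (K : set Y).
Hypotheses (K_cone : is_cone K) (K_convex : convexY K).

Lemma pointed_cone0 : pointed K -> K 0.
Proof. by move=> Kp; have : ([set 0] : set Y) 0 by []; rewrite -Kp => -[]. Qed.

Lemma cone_addr x y : K x -> K y -> K (x + y).
Proof.
move=> Kx Ky; have h2 : (2 : R) != 0 by rewrite pnatr_eq0.
have -> : x + y = 2 *: (2^-1 *: x + (1 - 2^-1) *: y).
  rewrite scalerDr !scalerA mulrBr mulfV // mulr1.
  by rewrite (_ : 2 - 1 = 1 :> R) ?scale1r //; lra.
by apply: K_cone => //; apply: K_convex => //; rewrite ?invr_ge0 ?invf_le1 ?ler1n.
Qed.

Lemma interior_cone_addl k k' : K k -> interior K k' -> interior K (k + k').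
Proof.
move=> Kk /interior_normP[e e0 H]; apply/interior_normP; exists e => // u ue.
by rewrite -addrA; apply: cone_addr => //; apply: H.
Qed.

Lemma interior_coneZ k (t : R) : 0 < t -> interior K k -> interior K (t *: k).
Proof.
move=> t0 /interior_normP[e e0 H]; apply/interior_normP; exists (t * e) => [|u ue].
  exact: mulr_gt0.
have -> : t *: k + u = t *: (k + t^-1 *: u).
  by rewrite scalerDr scalerA mulfV ?gt_eqF // scale1r.
apply: K_cone; first exact: ltW.
apply: H; rewrite normrZ ger0_norm ?invr_ge0 ?ltW //.
by rewrite mulrC ltr_pdivrMr // mulrC.
Qed.

End ConvexCone.

Lemma exists_gt0_nonzero_scalable (R : realType) (Y : normedModType R) (f : Y -> R) :
  (forall (a : R) x, f (a *: x) = a * f x) -> f <> (fun _ => 0) -> exists y, 0 < f y.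
Proof.
move=> fs fnz; have [y fy] : exists y, f y != 0.
  apply: contrapT => H; apply: fnz; apply/funext => y.
  by apply/eqP; apply: contrapT => fy; apply: H; exists y; apply/negP.
move: fy; rewrite neq_lt => /orP [fy0|fy0]; last by exists y.
by exists (-1 *: y); rewrite fs mulN1r oppr_gt0.
Qed.

Lemma dual_cone_nz_interior_gt0 (R : realType) (Y : normedModType R) (K : set Y) f k :
  in_dual_cone_nz K f -> interior K k -> 0 < f k.
Proof.
move=> [[fa fs _] fK fnz] /interior_normP[e e0 He].
have [y fy] := exists_gt0_nonzero_scalable fs fnz.
have [s s0 sy] := exists_scale_norm_lt y e0.
have := fK _ (He (- (s *: y)) ltac:(by rewrite normrN)).
rewrite fa -scaleN1r fs fs; nra.
Qed.

Section DualCharacterization.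
Variables (R : realType) (Y : normedModType R) (K A B : set Y).

Lemma upper_dual_images_subset (f : Y -> R) :
  (forall x y, f (x + y) = f x + f y) -> (forall k, K k -> 0 <= f k) ->
  A `<=` set_add B K ->
  setR_add (f @` A) `[0, +oo[ `<=` setR_add (f @` B) `[0, +oo[.
Proof.
move=> fa fK AsubBK _ [_ [a Aa <-] [r r0 <-]].
have [b Bb [k Kk <-]] := AsubBK a Aa.
exists (f b); first by exists b.
exists (f k + r); last by rewrite fa addrA.
move: r0; rewrite /= !in_itv /= !andbT; have := fK k Kk; lra.
Qed.

Lemma dual_images_subset_interior f :
  in_dual_cone_nz K f -> A `<=` set_add B (interior K) ->
  f @` A `<=` setR_add (f @` B) `]0, +oo[.
Proof.
move=> fK AsubBiK _ [a Aa <-].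
have [b Bb [k ik <-]] := AsubBiK a Aa.
have [[fa _ _] _ _] := fK.
exists (f b); first by exists b.
exists (f k); last by rewrite fa.
by rewrite /= in_itv /= andbT; apply: dual_cone_nz_interior_gt0 fK ik.
Qed.

Hypotheses (K_cone : is_cone K) (K0 : K 0) (B_neq0 : B !=set0).

Lemma subset_add_cone_of_upper_dual_images :
  convexY (set_add B K) -> closed (set_add B K) ->
  (forall f : Y -> R, in_dual_cone_nz K f ->
    setR_add (f @` A) `[0, +oo[ `<=` setR_add (f @` B) `[0, +oo[) ->
  A `<=` set_add B K.
Proof.
move=> cE clE H a Aa; apply: contrapT => nEa.
have [b0 Bb0] := B_neq0.
have /open_normP/(_ _ nEa)[e e0 Eball] := closed_openC clE.
pose C := [set y | exists w u, [/\ set_add B K w, `|u| < e & y = w + u]].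
have cC : convexY C.
  move=> x y t t0 t1 [w1 [u1 [Ew1 u1e ->]]] [w2 [u2 [Ew2 u2e ->]]].
  exists (t *: w1 + (1 - t) *: w2), (t *: u1 + (1 - t) *: u2); split.
  + exact: cE.
  + apply: le_lt_trans (ler_normD _ _) _.
    rewrite !normrZ !ger0_norm ?subr_ge0 //.
    have [->|tn0] := eqVneq t 0; first by rewrite mul0r add0r subr0 mul1r.
    have h1 : t * `|u1| < t * e by rewrite ltr_pM2l // lt0r tn0.
    have h2 : (1 - t) * `|u2| <= (1 - t) * e by rewrite ler_wpM2l ?subr_ge0 // ltW.
    lra.
  + by rewrite !scalerDr addrACA.
have oC : open C.
  apply/open_normP => _ [w [u [Ew ue ->]]].
  exists (e - `|u|); first by rewrite subr_gt0.
  move=> v ve; exists w, (u + v); split => //; last by rewrite addrA.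
  by apply: le_lt_trans (ler_normD _ _) _; lra.
have BKC w : set_add B K w -> C w by move=> Ew; exists w, 0; rewrite normr0 addr0.
have nCa : ~ C a.
  move=> [w [u [Ew ue E1]]]; apply: (Eball (- u)); first by rewrite normrN.
  by rewrite E1 addrK.
have Cb0 : C b0 by apply: BKC; exists b0 => //; exists 0; rewrite ?addr0.
have [f [fd fb0 fC]] := convex_open_separation cC oC Cb0 nCa.
have [fa fs _] := fd.
have fK k : K k -> 0 <= f k.
  move=> Kk; apply: (@ge0_of_forall_lerD_mul _ (f a) (f b0)) => t t0.
  rewrite -fs -fa; apply/fC/BKC; exists b0 => //; exists (t *: k) => //.
  by apply: K_cone => //; exact: ltW.
have fnz : f <> (fun _ => 0) by move=> f0; move: fb0; rewrite f0; lra.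
have [_ [b Bb <-] [r r0 far]] : setR_add (f @` B) `[0, +oo[ (f a).
  apply: (H f (And3 fd fK fnz)); exists (f a); first by exists a.
  by exists 0; [rewrite /= in_itv /= lexx | rewrite addr0].
have {}r0 : 0 <= r by move: r0; rewrite /= in_itv /= andbT.
have [s s0 su] := exists_scale_norm_lt (b0 - a) e0.
have : C (b - s *: (b0 - a)).
  exists b, (- (s *: (b0 - a))); split; last by [].
  - by exists b => //; exists 0 => //; rewrite addr0.
  - by rewrite normrN.
have fN v : f (- v) = - f v by rewrite -scaleN1r fs mulN1r.
move=> /fC; rewrite fa fN fs fa fN fb0 -far; nra.
Qed.

Hypothesis K_convex : convexY K.

Lemma subset_add_interior_of_dual_images :
  interior K !=set0 -> convexY (set_add B K) ->
  (forall f : Y -> R, in_dual_cone_nz K f ->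
    f @` A `<=` setR_add (f @` B) `]0, +oo[) ->
  A `<=` set_add B (interior K).
Proof.
move=> [k0 ik0] cE H a Aa; apply: contrapT => nDa.
have [b0 Bb0] := B_neq0.
have cD : convexY (set_add B (interior K)).
  move=> x y t t0 t1 [b1 Bb1 [k1 ik1 <-]] [b2 Bb2 [k2 ik2 <-]].
  have : set_add B K (t *: (b1 + 0) + (1 - t) *: (b2 + 0)).
    by apply: cE => //; [exists b1 => //; exists 0 | exists b2 => //; exists 0].
  rewrite !addr0 => -[b Bb [k Kk Eb]].
  exists b => //; exists (k + (t *: k1 + (1 - t) *: k2)).
    by apply: interior_cone_addl => //; apply: convexY_interior.
  by rewrite addrA Eb !scalerDr addrACA.
have oD : open (set_add B (interior K)).
  apply/open_normP => _ [b Bb [k ik <-]].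
  have [e e0 He] := (open_normP _).1 (@open_interior _ K) k ik.
  by exists e => // v ve; exists b => //; exists (k + v); [apply: He | rewrite addrA].
have Dc0 : set_add B (interior K) (b0 + k0) by exists b0 => //; exists k0.
have [f [fd fc0 fD]] := convex_open_separation cD oD Dc0 nDa.
have [fa fs _] := fd.
have fK k : K k -> 0 <= f k.
  move=> Kk; apply: (@ge0_of_forall_lerD_mul _ (f a) (f (b0 + k0))) => t t0.
  have : set_add B (interior K) (b0 + (t *: k + k0)).
    exists b0 => //; exists (t *: k + k0) => //.
    by apply: interior_cone_addl => //; apply: K_cone => //; exact: ltW.
  by move=> /fD; rewrite !fa fs; lra.
have fnz : f <> (fun _ => 0) by move=> f0; move: fc0; rewrite f0; lra.
have [_ [b Bb <-] [r r0 far]] : setR_add (f @` B) `]0, +oo[ (f a).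
  by apply: (H f (And3 fd fK fnz)); exists a.
have {}r0 : 0 < r by move: r0; rewrite /= in_itv /= andbT.
have : f a <= f b.
  apply: (@ler_of_forall_lerD_mul _ _ _ (f k0)) => [s s0|]; last first.
    exact: fK (interior_subset ik0).
  rewrite -fs -fa; apply: fD; exists b => //; exists (s *: k0) => //.
  exact: interior_coneZ.
lra.
Qed.

End DualCharacterization.

Theorem mainTheorem1 (R : realType) (Y : normedModType R) (K A B : set Y) :
  pointed_closed_convex_cone K -> A !=set0 -> B !=set0 ->
  (* (i) *)
  ((A `<=` set_add B K ->
      forall f : Y -> R, in_dual_cone_nz K f ->
        setR_add (f @` A) `[0, +oo[ `<=` setR_add (f @` B) `[0, +oo[)
   /\
   (convexY (set_add B K) -> closed (set_add B K) ->
      (forall f : Y -> R, in_dual_cone_nz K f ->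
        setR_add (f @` A) `[0, +oo[ `<=` setR_add (f @` B) `[0, +oo[) ->
      A `<=` set_add B K))
  /\
  (* (ii) *)
  (interior K !=set0 ->
   (A `<=` set_add B (interior K) ->
      forall f : Y -> R, in_dual_cone_nz K f ->
        f @` A `<=` setR_add (f @` B) `]0, +oo[)
   /\
   (convexY (set_add B K) ->
      (forall f : Y -> R, in_dual_cone_nz K f ->
        f @` A `<=` setR_add (f @` B) `]0, +oo[) ->
      A `<=` set_add B (interior K))).
Proof.
move=> [K_cone K_convex _ K_pointed] _ B_neq0.
have K0 := pointed_cone0 K_pointed.
split; first split.
- by move=> AsubBK f [[fa _ _] fK _]; apply: upper_dual_images_subset fa fK AsubBK.
- exact: subset_add_cone_of_upper_dual_images.
- move=> intK_neq0; split.
  + by move=> AsubBiK f fK; apply: dual_images_subset_interior fK AsubBiK.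
  + exact: subset_add_interior_of_dual_images.
Qed.
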